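(* For every integer $m\ge2$, $$G_m(t,0)=(-1)^m\,t\,\Pi_{m-1}(t)\quad\text{and}\quad G_m\!\left(t,\tfrac12\right)=\frac{(-1)^m}{2^{m-1}}\widetilde{\Pi}_{m-1}(t).$$
   Context: $G_1(t,\beta)=-1$ and for $m\ge2$, $G_m(t,\beta)=[\beta(t-1)-(m-1)t]G_{m-1}(t,\beta)+t(t-1)\frac{\partial}{\partial t}G_{m-1}(t,\beta)$. The Euler–Frobenius polynomials satisfy $\Pi_0(t)=1$, $\Pi_{m+1}(t)=(1+mt)\Pi_m(t)+t(1-t)\Pi_m'(t)$, and the modified Euler–Frobenius polynomials satisfy $\widetilde\Pi_0(t)=1$, $\widetilde\Pi_{m+1}(t)=(1+(2m+1)t)\widetilde\Pi_m(t)+2t(1-t)\widetilde\Pi_m'(t)$. *)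

From mathcomp Require Import all_boot all_order all_algebra.
Set Implicit Arguments. Unset Strict Implicit. Unset Printing Implicit Defensive.
Import GRing.Theory Num.Theory.
Local Open Scope ring_scope.

(* G_aux beta n = G_{n+1}(t, beta), as a polynomial in t over R. *)
Fixpoint G_aux (R : numFieldType) (beta : R) (n : nat) : {poly R} :=
  match n with
  | 0 => - 1
  | n'.+1 => let g := G_aux beta n' in
      (beta *: ('X - 1) - (n'.+1)%:R *: 'X) * g + ('X * ('X - 1)) * g^`()
  end.

(* G m beta = G_m(t, beta) for m >= 1 (G 0 beta is junk = G_1). *)
Definition G (R : numFieldType) (m : nat) (beta : R) : {poly R} := G_aux beta m.-1.

Fixpoint EF (R : numFieldType) (m : nat) : {poly R} :=
  match m with
  | 0 => 1
  | m'.+1 => (1 + m'%:R *: 'X) * EF R m' + ('X * (1 - 'X)) * (EF R m')^`()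
  end.

Fixpoint EFt (R : numFieldType) (m : nat) : {poly R} :=
  match m with
  | 0 => 1
  | m'.+1 => (1 + (2 * m' + 1)%:R *: 'X) * EFt R m'
             + (2%:R *: ('X * (1 - 'X))) * (EFt R m')^`()
  end.

From mathcomp Require Import all_boot all_order all_algebra ring.
Import GRing.Theory Num.Theory.
Local Open Scope ring_scope.
Set Implicit Arguments.
Unset Strict Implicit.
Unset Printing Implicit Defensive.

(* Both identities are proved by induction on m, comparing recurrences: one
   step of the recurrence for G_m(t, 0), applied to t * p, is minus t times one
   Euler-Frobenius step applied to p, and one step of the recurrence for
   G_m(t, 1/2), applied to p, is -1/2 times one modified Euler-Frobenius step
   applied to p.  Since the G-step is linear, the normalising constants
   (-1)^m and (-1)^m / 2^(m-1) simply accumulate. *)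

Section RecurrenceSteps.
Variable R : comNzRingType.

Definition G_step (beta : R) (k : nat) (g : {poly R}) : {poly R} :=
  (beta *: ('X - 1) - k%:R *: 'X) * g + ('X * ('X - 1)) * g^`().

Definition EF_step (k : nat) (p : {poly R}) : {poly R} :=
  (1 + k%:R *: 'X) * p + ('X * (1 - 'X)) * p^`().

Definition EFt_step (k : nat) (p : {poly R}) : {poly R} :=
  (1 + (2 * k + 1)%:R *: 'X) * p + (2%:R *: ('X * (1 - 'X))) * p^`().

Lemma G_stepZ (beta c : R) k g : G_step beta k (c *: g) = c *: G_step beta k g.
Proof. by rewrite /G_step derivZ -!scalerAr -scalerDr. Qed.

Lemma G_step0_mulX k p : G_step 0 k.+1 ('X * p) = - ('X * EF_step k p).
Proof.
rewrite /G_step /EF_step scale0r sub0r !derivE.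
rewrite -!mul_polyC !polyC_natr.
ring.
Qed.

Lemma G_step_half (h : R) : 2 * h = 1 ->
  forall k p, G_step h k.+1 p = - h *: EFt_step k p.
Proof.
move=> h2 k p; rewrite /G_step /EFt_step -!mul_polyC !polyC_natr polyCN natrD natrM.
have h2P : 2 * h%:P = 1 by rewrite -polyC_natr -polyCM h2.
apply/eqP; rewrite -subr_eq0; apply/eqP.
transitivity ((1 - 2 * h%:P) * ('X * ('X - 1) * p^`() - (k%:R + 1) * 'X * p)); first ring.
by rewrite h2P subrr mul0r.
Qed.

End RecurrenceSteps.

Section EulerFrobenius.
Variable R : numFieldType.

Lemma G_auxS (beta : R) n : G_aux beta n.+1 = G_step beta n.+1 (G_aux beta n).
Proof. by []. Qed.

Lemma EFS n : EF R n.+1 = EF_step n (EF R n).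
Proof. by []. Qed.

Lemma EFtS n : EFt R n.+1 = EFt_step n (EFt R n).
Proof. by []. Qed.

Lemma G_aux0 n : G_aux (0 : R) n.+1 = (-1) ^+ n *: ('X * EF R n.+1).
Proof.
elim: n => [|n IH].
  rewrite /= !derivE !scale0r -!mul_polyC polyC1.
  ring.
by rewrite G_auxS IH G_stepZ G_step0_mulX -EFS exprS mulN1r scaleNr scalerN.
Qed.

Lemma G_aux_half n :
  G_aux (2%:R^-1 : R) n = ((-1) ^+ n.+1 / 2%:R ^+ n) *: EFt R n.
Proof.
have h2 : 2%:R * (2%:R^-1 : R) = 1 by rewrite mulfV ?pnatr_eq0.
elim: n => [|n IH]; first by rewrite /= expr1 expr0 divr1 scaleN1r.
rewrite G_auxS IH G_stepZ (G_step_half h2) -EFtS scalerA.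
congr (_ *: _).
by rewrite [(-1) ^+ n.+2]exprS [2%:R ^+ n.+1]exprS invfM; ring.
Qed.

End EulerFrobenius.

Theorem lemma5p1 (R : numFieldType) (m : nat) :
  (2 <= m)%N ->
  G m 0 = (-1) ^+ m *: ('X * EF R m.-1) /\
  G m (2%:R^-1 : R) = ((-1) ^+ m / 2%:R ^+ m.-1) *: EFt R m.-1.
Proof.
case: m => [|[|n]] // _; split.
  by rewrite /G G_aux0 !exprS !mulN1r opprK.
by rewrite /G G_aux_half.
Qed.
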